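(* Let $\mathbf{F}_q$ have characteristic $p$, let $c\ge3$, and let $a_1=0,a_2=1,a_3,\dots,a_c$ be distinct elements of $\mathbf{F}_q$; put $D=\mathbf{F}_q\setminus\{a_1,\dots,a_c\}$. Then for every integer $1\le k\le q-c$ and every $b\in\mathbf{F}_q$, $$N(k,b,D)-\frac1q\binom{q-c}{k}=\frac1q(-1)^kR^c_k-(-1)^k\sum_{i_1=0}^{k}\sum_{i_2=0}^{k-i_1}\cdots\sum_{i_{c-2}=0}^{k-i_1-\cdots-i_{c-3}}S\Big(k-\sum_{j=1}^{c-2}i_j,\ k-\sum_{j=1}^{c-2}i_j-b+\sum_{j=1}^{c-2}i_ja_{c+1-j}\Big),$$ where the second argument of $S$ is computed in $\mathbf{F}_q$ (integers mapped into $\mathbf{F}_p$). Moreover, if $b,a_2,\dots,a_c$ are linearly independent over $\mathbf{F}_p$, then $$N(k,b,D)=\frac1q\binom{q-c}{k}+\frac1q(-1)^kR^c_k.$$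
   Context: $N(k,b,D)$ denotes the number of $k$-element subsets $\{x_1,\dots,x_k\}\subseteq D$ with $x_1+\dots+x_k=b$. Binomial coefficients $\binom{x}{m}=x(x-1)\cdots(x-m+1)/m!$ for real $x$, integer $m\ge0$. $R^1_j=-(-1)^{\lfloor j/p\rfloor}\binom{q/p-1}{\lfloor j/p\rfloor}$ for integers $j\ge0$, and $R^c_k=\sum_{j=0}^kR^{c-1}_j$ for $c\ge2$. For an integer $k\ge0$ and $e\in\mathbf{F}_q$: if $e\in\mathbf{F}_p$, $S(k,e)=\sum_{0\le i\le k,\ i\equiv e\ (\mathrm{mod}\ p)}R^1_i$ (sum over integers $i$ whose image in $\mathbf{F}_p$ is $e$); if $e\notin\mathbf{F}_p$, $S(k,e)=0$. *)

From HB Require Import structures.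
From mathcomp Require Import all_boot all_order all_algebra all_field.
Set Implicit Arguments. Unset Strict Implicit. Unset Printing Implicit Defensive.
Import Order.TTheory GRing.Theory Num.Theory.
Local Open Scope ring_scope.

Definition Ncount (F : finFieldType) (k : nat) (b : F) (D : {set F}) : nat :=
  #|[set A : {set F} | [&& A \subset D, #|A| == k & \sum_(x in A) x == b]]|.

(* R^1_j = -(-1)^{floor(j/p)} binom(q/p - 1, floor(j/p)), q = #|F| *)
Definition R1 (p q j : nat) : rat :=
  - ((-1) ^+ (j %/ p)%N * ('C(q %/ p - 1, j %/ p))%:R).

(* Rsh n k = R^{n+1}_k *)
Fixpoint Rsh (p q n k : nat) : rat :=
  if n is n'.+1 then \sum_(j < k.+1) Rsh p q n' j else R1 p q k.

(* R^c_k for c >= 1 *)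
Definition R (p q c k : nat) : rat := Rsh p q c.-1 k.

Definition S (F : finFieldType) (p : nat) (k : nat) (e : F) : rat :=
  if [exists i : 'I_p, e == (i : nat)%:R]
  then \sum_(i < k.+1 | ((i : nat)%:R == e :> F)) R1 p #|F| i
  else 0.

(* Write N(k,b,D) for the number of k-subsets of D with sum b, q = #|F| and
   p = char F.  The proof has three stages.
   1. Elementary counting in F: the deletion recurrence
      N(k+1,b,D) = N(k+1,b,D\a) + N(k,b-a,D\a) and its iterate (inclusion-
      exclusion on the deleted point), translation invariance, and two double
      countings (over the sum b, and over a removed point t).
   2. The punctured field: N(k,b,F\{0}) = C(q-1,k)/q + (-1)^k R^1_k (1/q - [b=0])
      by induction on k.  If p does not divide k+1 the count on F is uniform
      in b; if p | k+1 every F\{t} has the same count, and double counting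
      gives (k+1) N(k+1) = (q-k-1) N(k).
   3. Removing a_2 = 1, a_3, ..., a_c one at a time by inclusion-exclusion.
      An alternating-sum identity shows that the shape of the formula is
      preserved: each removal turns R^c into R^(c+1) and adds one summation
      variable to the S-sum Ssum.  When b, a_2, ..., a_c are independent over
      F_p no argument of S lies in F_p, so the S-sum vanishes. *)

From HB Require Import structures.
From mathcomp Require Import all_boot all_order all_algebra all_field.
From mathcomp Require Import zify.
Set Implicit Arguments. Unset Strict Implicit. Unset Printing Implicit Defensive.
Import Order.TTheory GRing.Theory Num.Theory.
Local Open Scope ring_scope.

Section SubsetCounts.

Variable F : finFieldType.
Implicit Types (D : {set F}) (a b t : F).

Lemma NcountE k b D :
  Ncount k b D = (\sum_(A : {set F} | (#|A| == k) && ((\sum_(x in A) x)%R == b))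
                    (A \subset D : nat))%N.
Proof.
rewrite /Ncount -sum1_card big_mkcond [RHS]big_mkcond /=.
by apply: eq_bigr => A _; rewrite inE; case: (A \subset D); case: (#|A| == k); case: (_ == b).
Qed.

Lemma Ncount_card0 b D : Ncount 0 b D = (b == 0).
Proof.
rewrite NcountE (eq_bigl (fun A => (A == set0) && (b == 0))); last first.
  by move=> A; rewrite cards_eq0; case: eqP => // ->; rewrite big_set0 eq_sym.
case: (b == 0); last by rewrite big_pred0 // => A; rewrite andbF.
by rewrite (big_pred1 set0) ?sub0set // => A; rewrite andbT.
Qed.

(* Deletion recurrence: split the subsets of D according to whether they contain a. *)
Lemma Ncount_remove D a k b : a \in D ->
  Ncount k.+1 b D = (Ncount k.+1 b (D :\ a) + Ncount k (b - a)%R (D :\ a))%N.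
Proof.
move=> aD; rewrite /Ncount.
set X := [set A : {set F} | _].
rewrite -(cardsID [set A : {set F} | a \in A] X) addnC; congr (_ + _)%N.
  apply: eq_card => A; rewrite !inE; apply/idP/idP.
    case/and4P=> aA sAD cA sA; rewrite cA sA !andbT.
    apply/subsetP=> x xA; rewrite !inE (subsetP sAD) // andbT.
    by apply/negP=> /eqP ex; move: aA; rewrite -ex xA.
  case/and3P=> sAD cA sA; apply/and4P; split => //.
    by apply/negP=> aA; move: (subsetP sAD a aA); rewrite !inE eqxx.
  exact: subset_trans sAD (subsetDl _ _).
set Y := [set B : {set F} | [&& B \subset D :\ a, _ & _]].
have notin_Y B : B \in Y -> a \notin B.
  by rewrite inE => /and3P[/subsetP sBD _ _]; apply/negP=> /sBD; rewrite !inE eqxx.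
have -> : X :&: [set A : {set F} | a \in A] = (fun B => a |: B) @: Y.
  apply/setP=> A; rewrite !inE; apply/idP/imsetP.
    case/andP=> /and3P[sAD /eqP cA /eqP sA] aA.
    exists (A :\ a); last by rewrite setD1K.
    rewrite !inE; apply/and3P; split; first exact: setSD.
      by rewrite (cardsD1 a A) aA add1n in cA; case: cA => ->.
    by rewrite -sA (big_setD1 a aA) /= addrC addrK.
  case=> B YB ->; have aB := notin_Y B YB; move: YB.
  rewrite inE => /and3P[sBD /eqP cB /eqP sB].
  rewrite setU11 andbT cardsU1 aB cB eqxx /= big_setU1 //= sB addrC subrK eqxx andbT.
  apply/subsetP=> x; rewrite !inE => /orP[/eqP -> //| /(subsetP sBD)].
  by rewrite !inE => /andP[].
rewrite card_in_imset // => B1 B2 /notin_Y n1 /notin_Y n2 E.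
by rewrite -(setU1K n1) -(setU1K n2) E.
Qed.

Lemma Ncount_translate D t k b :
  Ncount k b D = Ncount k (b + t *+ k) [set x + t | x in D].
Proof.
rewrite /Ncount.
have inj : injective (fun x : F => x + t) by apply: addIr.
rewrite -[RHS](card_preimset _ (imset_inj inj)); apply: eq_card => A.
rewrite !inE /= (card_imset _ inj) big_imset /=; last by move=> x y _ _; apply: inj.
have -> : ([set x + t | x in A] \subset [set x + t | x in D]) = (A \subset D).
  apply/idP/idP; last exact: imsetS.
  move/subsetP=> H; apply/subsetP=> x xA.
  by rewrite -(mem_imset _ _ inj) H // (mem_imset _ _ inj).
rewrite big_split /= sumr_const.
case: (boolP (#|A| == k)) => [/eqP ->|]; last by rewrite !andFb !andbF.
by rewrite (inj_eq (addIr _)).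
Qed.

Lemma translate_setT t : [set x + t | x in [set: F]] = [set: F].
Proof.
apply/setP=> x; rewrite inE; apply/imsetP; exists (x - t); first by rewrite inE.
by rewrite subrK.
Qed.

Lemma translate_setD1 t u : [set x + t | x in [set: F] :\ u] = [set: F] :\ (u + t).
Proof.
apply/setP=> x; rewrite !inE andbT; apply/imsetP/idP.
  by case=> y; rewrite !inE andbT => yu ->; rewrite (inj_eq (addIr _)).
move=> xu; exists (x - t); last by rewrite subrK.
by rewrite !inE andbT; apply: contra xu => /eqP <-; rewrite subrK.
Qed.

(* Every k-subset of F has exactly one sum. *)
Lemma sum_Ncount_full k : (\sum_(b : F) Ncount k b setT)%N = 'C(#|F|, k).
Proof.
under eq_bigr do rewrite NcountE big_mkcond /=.
rewrite exchange_big /= -card_draws -sum1_card [RHS]big_mkcond /=.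
apply: eq_bigr => A _; rewrite inE subsetT; case: (#|A| == k) => /=; last by rewrite big1.
rewrite (bigD1 (\sum_(x in A) x)) //= eqxx big1 ?addn0 // => b.
by rewrite eq_sym => /negbTE ->.
Qed.

(* When k is invertible in F, translation makes N(k,b,F) independent of b,
   so each value is C(q,k)/q. *)
Lemma Ncount_full_uniform k b : (k%:R : F) != 0 ->
  (#|F| * Ncount k b setT)%N = 'C(#|F|, k).
Proof.
move=> k0; have shift (c : F) : Ncount k c [set: F] = Ncount k 0 [set: F].
  rewrite (Ncount_translate _ (- c / k%:R)) translate_setT.
  by rewrite -(mulr_natr (- c / k%:R) k) divfK // addrN.
by rewrite -sum_Ncount_full (eq_bigr _ (fun c _ => shift c)) sum_nat_const shift.
Qed.

(* Double counting of pairs (A, t) with t outside the k-subset A. *)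
Lemma sum_Ncount_punctured k b :
  (\sum_(t : F) Ncount k b ([set: F] :\ t))%N = ((#|F| - k) * Ncount k b setT)%N.
Proof.
under eq_bigr do rewrite NcountE.
rewrite exchange_big /= NcountE big_distrr /=; apply: eq_bigr => A /andP[/eqP cA _].
rewrite subsetT muln1 -cA -(cardsC A) addKn -sum1_card [RHS]big_mkcond /=.
apply: eq_bigr => t _; rewrite !inE.
have -> : (A \subset [set: F] :\ t) = (t \notin A).
  apply/subsetP/idP => [sub | tA x xA]; last by rewrite !inE andbT; apply: contra tA => /eqP <-.
  by apply/negP => /sub; rewrite !inE eqxx.
by case: (t \in A).
Qed.

Lemma Ncount_inclusion_exclusion D a k b : a \in D ->
  (Ncount k b (D :\ a))%:R
  = \sum_(i < k.+1) (-1) ^+ i * (Ncount (k - i) (b - i%:R * a) D)%:R :> rat.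
Proof.
move=> aD; elim: k b => [|k IH] b.
  by rewrite big_ord1 /= !Ncount_card0 mul0r subr0 expr0 mul1r.
have -> : (Ncount k.+1 b (D :\ a))%:R
    = (Ncount k.+1 b D)%:R - (Ncount k (b - a) (D :\ a))%:R :> rat.
  by rewrite (Ncount_remove k b aD) natrD addrK.
rewrite IH [RHS]big_ord_recl /= expr0 mul1r.
rewrite subn0 mul0r subr0 -sumrN; congr (_ + _); apply: eq_bigr => i _.
rewrite /bump /= add1n subSS exprS mulN1r mulNr; congr (- (_ * _%:R)).
by congr Ncount; rewrite -natr1 mulrDl mul1r opprD addrA addrAC.
Qed.

Variables (p : nat) (hp : p \in [pchar F]).

Lemma pchar_dvd_card : (p %| #|F|)%N.
Proof.
have gt1 := card_finNzRing_gt1 F.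
have cardF : #|F| = (p ^ logn p #|F|)%N := card_pprimeChar hp.
by move: gt1; rewrite cardF; case: logn => [|n] //; rewrite expnS dvdn_mulr.
Qed.

(* For p | k, translation by t fixes the sums of k-subsets, so removing any
   single point t gives the same count as removing 0. *)
Lemma Ncount_punctured_shift k b t : (p %| k)%N ->
  Ncount k b ([set: F] :\ t) = Ncount k b ([set: F] :\ 0).
Proof.
move=> pk; rewrite [RHS](Ncount_translate _ t) translate_setD1 add0r.
by rewrite -mulr_natr; move: pk; rewrite (dvdn_pcharf hp) => /eqP ->; rewrite mulr0 addr0.
Qed.

End SubsetCounts.

(* R^1_j depends only on floor(j/p): it is constant while p does not divide j+1 ... *)
Lemma R1_ndvd_step p q k : (0 < p)%N -> ~~ (p %| k.+1)%N -> R1 p q k.+1 = R1 p q k.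
Proof. by move=> p0 pk; rewrite /R1 divnS // (negbTE pk). Qed.

(* ... and when p | j+1 and p | q it moves to the next binomial coefficient
   C(q/p-1, m+1) = (q/p-1-m)/(m+1) C(q/p-1, m). *)
Lemma R1_dvd_step p q k : (0 < p)%N -> (p %| k.+1)%N -> (p %| q)%N ->
  (k.+1)%:R * ((-1) ^+ k.+1 * R1 p q k.+1)
  = (q - k.+1)%:R * ((-1) ^+ k * R1 p q k) :> rat.
Proof.
move=> p0 pk /dvdnP[m ->]; have /dvdnP[[|j] Ek] := pk; first by rewrite mul0n in Ek.
have E1 : (k.+1 %/ p = j.+1)%N by rewrite Ek mulnK.
have E2 : (k %/ p = j)%N by move: (divnS k p0); rewrite E1 pk add1n => -[].
have E3 : (m * p - k.+1 = (m - j.+1) * p)%N by rewrite Ek mulnBl.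
have Hbin : (j.+1 * 'C(m - 1, j.+1) = (m - j.+1) * 'C(m - 1, j))%N.
  by rewrite mul_bin_left -subnDA add1n.
rewrite /R1 E1 E2 E3 {1}Ek !natrM !exprS !mulN1r !mulrNN !mulNr !mulrN; congr (- _).
rewrite mulnK // mulrCA [RHS]mulrCA; congr (_ * _).
by rewrite mulrCA [RHS]mulrCA -!natrM mulnAC Hbin mulnAC.
Qed.

(* Closed form of N(k, b, F \ {0}) for q = #|F|; the flag b0 records whether b = 0. *)
Definition punctured_count (p q k : nat) (b0 : bool) : rat :=
  'C(q.-1, k)%:R / q%:R + (-1) ^+ k * R1 p q k * (q%:R^-1 - b0%:R).

(* Across a multiple of p the closed form obeys the same recurrence as the count. *)
Lemma punctured_count_dvd_step p q k b0 : (0 < p)%N -> (p %| k.+1)%N -> (p %| q)%N ->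
  (k.+1)%:R * punctured_count p q k.+1 b0 = (q - k.+1)%:R * punctured_count p q k b0.
Proof.
move=> p0 pk pq; rewrite /punctured_count mulrDr [RHS]mulrDr; congr (_ + _).
  by rewrite !mulrA -!natrM mul_bin_left -subn1 -subnDA add1n.
by rewrite mulrA R1_dvd_step // [RHS]mulrA.
Qed.

Lemma punctured_count_ndvd_step p q k b0 : (0 < p)%N -> ~~ (p %| k.+1)%N -> (0 < q)%N ->
  punctured_count p q k.+1 b0 + punctured_count p q k b0 = 'C(q, k.+1)%:R / q%:R.
Proof.
move=> p0 pk q0; rewrite /punctured_count R1_ndvd_step //.
rewrite -[X in _ = 'C(X, _)%:R / _](prednK q0) binS natrD mulrDl.
by rewrite exprS mulN1r !mulNr addrACA addNr addr0.
Qed.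

Section PuncturedField.

Variables (F : finFieldType) (p : nat) (hp : p \in [pchar F]).
Local Notation q := #|F|.
Local Notation Nstar k b := (Ncount k b ([set: F] :\ 0)).

(* For p | k+1, double counting the removed point (all choices give the
   same count by translation) yields (k+1) N*(k+1) = (q-k-1) N*(k). *)
Lemma Ncount_punctured_dvd_step k b : (p %| k.+1)%N -> (k < q)%N ->
  (k.+1 * Nstar k.+1 b = (q - k.+1) * Nstar k b)%N.
Proof.
move=> pk kq; have := sum_Ncount_punctured k.+1 b.
rewrite (eq_bigr _ (fun t _ => Ncount_punctured_shift hp b t pk)) sum_nat_const.
rewrite (Ncount_remove k b (in_setT 0)) subr0 mulnDr => E.
apply/eqP; rewrite -(eqn_add2l ((q - k.+1) * Nstar k.+1 b)) -E -mulnDl.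
by rewrite subnK.
Qed.

(* For k+1 invertible in F, the uniform count on F splits as N*(k+1) + N*(k). *)
Lemma Ncount_punctured_ndvd_step k b : (k.+1%:R : F) != 0 ->
  (q * (Nstar k.+1 b + Nstar k b))%N = 'C(q, k.+1).
Proof.
by move=> k0; have := Ncount_full_uniform b k0; rewrite (Ncount_remove k b (in_setT 0)) subr0.
Qed.

Lemma Ncount_punctured k b : (k < q)%N ->
  (Nstar k b)%:R = punctured_count p q k (b == 0).
Proof.
have q0 : (0 < q)%N by apply: ltnW (card_finNzRing_gt1 F).
have p0 : (0 < p)%N by apply/prime_gt0/(pcharf_prime hp).
elim: k => [_ | k IH kq].
  rewrite Ncount_card0 /punctured_count /R1 div0n !bin0 !expr0 !mul1r mulN1r.
  by rewrite opprB addrC subrK.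
have kq' : (k < q)%N by apply: ltnW.
case: (boolP (p %| k.+1)%N) => pk.
  have k0 : (k.+1%:R : rat) != 0 by rewrite pnatr_eq0.
  apply: (mulfI k0); rewrite -natrM (Ncount_punctured_dvd_step b pk kq') natrM IH //.
  by rewrite punctured_count_dvd_step // (pchar_dvd_card hp).
have k0 : (k.+1%:R : F) != 0 by rewrite -(dvdn_pcharf hp).
apply: (addIr (Nstar k b)%:R); rewrite -natrD IH // punctured_count_ndvd_step //.
by rewrite -(Ncount_punctured_ndvd_step b k0) natrM [RHS]mulrC mulKf // pnatr_eq0 -lt0n.
Qed.

End PuncturedField.

Lemma sum_rev (R : nmodType) (f : nat -> R) k :
  \sum_(i < k.+1) f (k - i)%N = \sum_(i < k.+1) f i.
Proof.
rewrite (reindex_inj rev_ord_inj) /=; apply: eq_bigr => i _.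
by rewrite subSS subKn // -ltnS.
Qed.

Lemma alternating_binomial_sum M k : (0 < M)%N ->
  \sum_(i < k.+1) (-1) ^+ i * 'C(M, k - i)%:R = 'C(M.-1, k)%:R :> rat.
Proof.
case: M => // M _ /=; elim: k => [|k IH]; first by rewrite big_ord1 expr0 mul1r !bin0.
rewrite big_ord_recl expr0 mul1r subn0.
under eq_bigr do rewrite /bump /= ?add1n subSS exprS mulN1r mulNr.
by rewrite sumrN IH binS natrD addrK.
Qed.

(* The shape of the formula is preserved by inclusion-exclusion: if every
   N(i) equals C(M,k-i)/q + (-1)^(k-i) (r(k-i)/q - g(i)), then their
   alternating sum equals C(M-1,k)/q + (-1)^k ((sum_j<=k r j)/q - sum_i g i). *)
Lemma alternating_combination (M k : nat) (r g N : nat -> rat) (qi : rat) : (0 < M)%N ->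
  (forall i, (i <= k)%N ->
     N i = 'C(M, k - i)%:R * qi + (-1) ^+ (k - i) * r (k - i)%N * qi
           - (-1) ^+ (k - i) * g i) ->
  \sum_(i < k.+1) (-1) ^+ i * N i
  = 'C(M.-1, k)%:R * qi + (-1) ^+ k * (\sum_(j < k.+1) r j) * qi
    - (-1) ^+ k * \sum_(i < k.+1) g i.
Proof.
move=> M0 HN.
have sign (i : 'I_k.+1) : (-1) ^+ i * (-1) ^+ (k - i) = (-1) ^+ k :> rat.
  by rewrite -exprD subnKC // -ltnS.
rewrite (eq_bigr (fun i : 'I_k.+1 => (-1) ^+ i * 'C(M, k - i)%:R * qi
          + (-1) ^+ k * r (k - i)%N * qi - (-1) ^+ k * g i)); last first.
  move=> i _; rewrite HN; last by rewrite -ltnS.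
  by rewrite !mulrDr mulrN !mulrA sign.
rewrite sumrB big_split /= -!mulr_suml alternating_binomial_sum // -!mulr_sumr.
by rewrite (sum_rev r k).
Qed.

Definition avoid_set (F : finFieldType) (a : nat -> F) (c : nat) : {set F} :=
  [set x : F | x \notin [seq a i | i <- iota 1 c]].

Lemma avoid_setS (F : finFieldType) (a : nat -> F) c :
  avoid_set a c.+1 = avoid_set a c :\ a c.+1.
Proof.
rewrite /avoid_set; have -> : iota 1 c.+1 = iota 1 c ++ [:: c.+1].
  by rewrite -[c.+1]addn1 iotaD /= add1n addn1.
rewrite map_cat /=.
by apply/setP => x; rewrite in_setD1 !inE mem_cat mem_seq1 negb_or andbC.
Qed.

Lemma avoid_set2 (F : finFieldType) (a : nat -> F) : a 1%N = 0 -> a 2%N = 1 ->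
  avoid_set a 2 = [set: F] :\ 0 :\ 1.
Proof.
by move=> a1 a2; apply/setP => x; rewrite !inE /= a1 a2 negb_or andbT andbC.
Qed.

Section AvoidTwo.

Variables (F : finFieldType) (p : nat) (hp : p \in [pchar F]).
Local Notation q := #|F|.

(* S(k,e) sums R^1_i over i <= k with i = e in F; the prime-field test in its
   definition is automatic, as every integer lands in F_p. *)
Lemma S_as_sum k (e : F) : S p k e = \sum_(i < k.+1 | (i : nat)%:R == e) R1 p q i.
Proof.
rewrite /S; case: ifP => // /negbT noFp; rewrite big1 // => i /eqP ei.
case/existsP: noFp; have p0 : (0 < p)%N by apply/prime_gt0/(pcharf_prime hp).
by exists (Ordinal (ltn_pmod i p0)); rewrite /= (GRing.natr_mod_pchar hp) ei.
Qed.

(* The case c = 2 of the theorem: D_2 = F \ {0, 1}, by inclusion-exclusion on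
   the point 1 and the closed form for F \ {0}. *)
Lemma Ncount_avoid2 (a : nat -> F) (ha1 : a 1%N = 0) (ha2 : a 2%N = 1) k b :
  (k <= q - 2)%N ->
  (Ncount k b (avoid_set a 2))%:R
  = 'C(q - 2, k)%:R * q%:R^-1 + (-1) ^+ k * R p q 2 k * q%:R^-1
    - (-1) ^+ k * S p k (k%:R - b).
Proof.
move=> kq; have q1 : (1 < q)%N := card_finNzRing_gt1 F.
rewrite avoid_set2 // Ncount_inclusion_exclusion; last by rewrite !inE andbT oner_neq0.
rewrite (alternating_combination (M := q.-1) (qi := q%:R^-1) (r := R1 p q)
   (N := fun i => (Ncount (k - i) (b - i%:R * 1) ([set: F] :\ 0))%:R)
   (g := fun i => (b - i%:R * 1 == 0)%:R * R1 p q (k - i))); last 2 first.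
- by rewrite -ltnS prednK // ltnW.
- move=> i ik; rewrite (Ncount_punctured hp); last by lia.
  by rewrite /punctured_count mulrBr addrA (mulrC _%:R (R1 _ _ _)) mulrA.
rewrite subn2; congr (_ - _ * _).
rewrite S_as_sum [RHS]big_mkcond /=.
rewrite -[RHS](sum_rev (fun i => if i%:R == k%:R - b :> F then R1 p q i else 0)).
apply: eq_bigr => i _ /=; have ik : (i <= k)%N by rewrite -ltnS.
rewrite mulr1 natrB // subr_eq0 (inj_eq (addrI _)) eqr_opp eq_sym.
by case: (_ == _); rewrite ?mul1r ?mul0r.
Qed.

End AvoidTwo.

Definition ffun_cons n (T : finType) (u : T * {ffun 'I_n -> T}) : {ffun 'I_n.+1 -> T} :=
  [ffun j : 'I_n.+1 => if unlift ord0 j is Some j' then u.2 j' else u.1].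

Lemma ffun_cons_bij n (T : finType) : bijective (@ffun_cons n T).
Proof.
exists (fun t : {ffun 'I_n.+1 -> T} => (t ord0, [ffun j : 'I_n => t (lift ord0 j)])).
  case=> x t; rewrite /ffun_cons /= ffunE unlift_none; congr (_, _).
  by apply/ffunP => j; rewrite !ffunE liftK.
move=> t; apply/ffunP => j; rewrite /ffun_cons ffunE /=.
by case: unliftP => [j' ->|->]; rewrite ?ffunE.
Qed.

Lemma big_ffun_cons (R : Type) (idx : R) (op : R -> R -> R) n (T : finType)
    (u : T * {ffun 'I_n -> T}) (f : nat -> T -> R) :
  \big[op/idx]_(j < n.+1) f j (ffun_cons u j)
  = op (f 0%N u.1) (\big[op/idx]_(j < n) f j.+1 (u.2 j)).
Proof.
rewrite big_ord_recl /ffun_cons ffunE unlift_none; congr (op _ _).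
by apply: eq_bigr => j _; rewrite ffunE liftK.
Qed.

(* The iterated S-sum of the theorem: n summation variables t_j < K with total
   at most k; the parameter e stands for -b. *)
Definition Ssum (F : finFieldType) (p : nat) (a : nat -> F) (n K k : nat) (e : F) : rat :=
  \sum_(t : {ffun 'I_n -> 'I_K} | (\sum_(j < n) (t j : nat) <= k)%N)
     S p (k - \sum_(j < n) (t j : nat))%N
       ((k - \sum_(j < n) (t j : nat))%N%:R + e
        + \sum_(j < n) (t j : nat)%:R * a (n.+2 - j)%N).

Lemma Ssum0 (F : finFieldType) p (a : nat -> F) K k e :
  Ssum p a 0 K k e = S p k (k%:R + e).
Proof.
rewrite /Ssum (big_pred1 (ffun0 (card_ord 0))) /=; first by rewrite !big_ord0 subn0 addr0.
by move=> t; rewrite big_ord0 leq0n; apply/esym/eqP/ffunP => -[].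
Qed.

Lemma Ssum_rec (F : finFieldType) p (a : nat -> F) n K k e : (k < K)%N ->
  Ssum p a n.+1 K k e = \sum_(i < k.+1) Ssum p a n K (k - i) (e + i%:R * a n.+3).
Proof.
move=> kK.
rewrite (big_ord_widen K (fun i => Ssum p a n K (k - i) (e + i%:R * a n.+3)) kK).
rewrite /Ssum (reindex _ (onW_bij _ (ffun_cons_bij n 'I_K))) /= pair_big_dep /=.
apply: eq_big => [[x t]|u _].
  by rewrite (big_ffun_cons _ _ _ (fun _ (x : 'I_K) => (x : nat))) /=; lia.
rewrite (big_ffun_cons _ _ _ (fun _ (x : 'I_K) => (x : nat))) subnDA.
rewrite (big_ffun_cons _ _ _ (fun j (x : 'I_K) => (x : nat)%:R * a (n.+3 - j)%N)) /= subn0.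
by rewrite !addrA; do 2 f_equal; apply: eq_bigr => j _; rewrite subSS.
Qed.

Section AvoidMany.

Variables (F : finFieldType) (p : nat) (hp : p \in [pchar F]).
Variables (a : nat -> F) (ha1 : a 1%N = 0) (ha2 : a 2%N = 1).
Local Notation q := #|F|.

Lemma a_in_avoid_set c : {in [pred i | (1 <= i <= c.+1)%N] &, injective a} ->
  a c.+1 \in avoid_set a c.
Proof.
move=> inj_a; rewrite inE; apply/mapP => -[i]; rewrite mem_iota add1n => /andP[i1 ic] E.
have := inj_a c.+1 i; rewrite !inE leqnn i1 (ltnW ic) => /(_ isT isT E) Ei.
by move: ic; rewrite -Ei ltnn.
Qed.

(* Main formula for D_(n+2), by induction on n: removing a_(n+3) from D_(n+2)
   is an inclusion-exclusion whose terms are given by the induction hypothesis;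
   summing them produces one more level of R (R^(c+1)_k = sum_(j<=k) R^c_j)
   and one more summation variable in Ssum. *)
Lemma Ncount_avoid n : {in [pred i | (1 <= i <= n.+2)%N] &, injective a} ->
  (n.+2 < q)%N -> forall K k b, (k < K)%N -> (k <= q - n.+2)%N ->
  (Ncount k b (avoid_set a n.+2))%:R
  = 'C(q - n.+2, k)%:R * q%:R^-1 + (-1) ^+ k * R p q n.+2 k * q%:R^-1
    - (-1) ^+ k * Ssum p a n K k (- b).
Proof.
elim: n => [|n IH] inj_a nq K k b kK kq; first by rewrite (Ncount_avoid2 hp) // Ssum0.
have inj_a' : {in [pred i | (1 <= i <= n.+2)%N] &, injective a}.
  move=> i j; rewrite !inE => /andP[i1 i2] /andP[j1 j2].
  by apply: inj_a; rewrite inE ?i1 ?j1 ltnW.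
rewrite avoid_setS Ncount_inclusion_exclusion ?a_in_avoid_set //.
rewrite (alternating_combination (M := q - n.+2) (qi := q%:R^-1) (r := R p q n.+2)
   (N := fun i => (Ncount (k - i) (b - i%:R * a n.+3) (avoid_set a n.+2))%:R)
   (g := fun i => Ssum p a n K (k - i) (- (b - i%:R * a n.+3)))); last 2 first.
- by rewrite subn_gt0 ltnW.
- move=> i ik; rewrite (IH inj_a' (ltnW nq) K) //; lia.
rewrite -subnS Ssum_rec //; congr (_ - _ * _); apply: eq_bigr => i _.
by rewrite opprB addrC.
Qed.

End AvoidMany.

Lemma sum_single_coef (F : finFieldType) (a : nat -> F) lo hi i z : (lo <= i < hi)%N ->
  \sum_(lo <= j < hi) (if j == i then z else 0%N)%:R * a j = z%:R * a i.
Proof.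
move=> ij; rewrite (eq_bigr (fun j => if j == i then z%:R * a j else 0)).
  by rewrite -big_mkcond big_nat1_eq ij.
by move=> j _; case: eqP; rewrite ?mul0r.
Qed.

Section Independence.

Variables (F : finFieldType) (p : nat) (hp : p \in [pchar F]).
Variables (a : nat -> F) (n : nat) (b : F).
Hypothesis a2 : a 2%N = 1.
Hypothesis b_indep : forall (l0 : nat) (l : nat -> nat),
  l0%:R * b + \sum_(2 <= j < n.+3) (l j)%:R * a j = 0 ->
  l0%:R = 0 :> F /\ (forall j : nat, (2 <= j <= n.+2)%N -> (l j)%:R = 0 :> F).

Lemma natr_pred_pchar x : ((p.-1 * x)%:R : F) = - x%:R.
Proof.
have p0 : (0 < p)%N by apply/prime_gt0/(pcharf_prime hp).
by rewrite natrM -subn1 natrB // (pcharf0 hp) sub0r mulN1r.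
Qed.

(* Linear independence of b, a_2, ..., a_(n+2) over F_p, used with
   natural-number coefficients on both sides. *)
Lemma independent_not_in_span (x y : nat -> nat) :
  b + \sum_(2 <= j < n.+3) (x j)%:R * a j != \sum_(2 <= j < n.+3) (y j)%:R * a j.
Proof.
apply/eqP => E.
suff /b_indep[/eqP] : 1%:R * b + \sum_(2 <= j < n.+3) (x j + p.-1 * y j)%:R * a j = 0.
  by rewrite oner_eq0.
under eq_bigr do rewrite natrD natr_pred_pchar mulrDl mulNr.
by rewrite mul1r big_split sumrN /= addrA E subrr.
Qed.

(* Hence no term of Ssum has its S-argument in F_p, and Ssum vanishes. *)
Lemma Ssum_independent K k : Ssum p a n K k (- b) = 0.
Proof.
rewrite /Ssum big1 // => t _; rewrite /S ifN //; apply/existsP => -[i /eqP ei].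
set m := (k - _)%N in ei.
pose y j := ((if j == 2 then m else 0)
             + \sum_(j' < n) (if j == (n.+2 - j')%N then (t j' : nat) else 0))%N.
have /negP := independent_not_in_span (fun j => if j == 2 then i : nat else 0%N) y; apply.
rewrite sum_single_coef // a2 mulr1 -ei addrCA addrA subrK /y /=; apply/eqP.
under [RHS]eq_bigr do rewrite natrD mulrDl natr_sum mulr_suml.
rewrite big_split /= sum_single_coef // a2 mulr1 exchange_big /=.
congr (_ + _); apply: eq_bigr => j' _; rewrite sum_single_coef //.
by have := ltn_ord j'; lia.
Qed.

End Independence.

Theorem lemma4p2 (F : finFieldType) (p : nat) (hp : p \in [pchar F])
  (c : nat) (hc : (3 <= c)%N) (a : nat -> F)
  (ha1 : a 1%N = 0) (ha2 : a 2%N = 1)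
  (hinj : forall i j : nat, (1 <= i <= c)%N -> (1 <= j <= c)%N ->
            a i = a j -> i = j) :
  let q := #|F| in
  let D := [set x : F | x \notin [seq a i | i <- iota 1 c]] in
  (forall (k : nat) (b : F), (1 <= k <= q - c)%N ->
     (Ncount k b D)%:R - ('C(q - c, k))%:R / q%:R
     = q%:R^-1 * ((-1) ^+ k * R p q c k)
       - (-1) ^+ k *
         \sum_(t : {ffun 'I_(c - 2) -> 'I_k.+1} |
                 (\sum_(j < c - 2) (t j : nat) <= k)%N)
            S p (k - \sum_(j < c - 2) (t j : nat))%N
              ((k - \sum_(j < c - 2) (t j : nat))%N%:R - b
               + \sum_(j < c - 2) (t j : nat)%:R * a (c - j)%N))
  /\
  (forall (k : nat) (b : F), (1 <= k <= q - c)%N ->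
     (forall (l0 : nat) (l : nat -> nat),
        l0%:R * b + \sum_(2 <= j < c.+1) (l j)%:R * a j = 0 ->
        l0%:R = 0 :> F /\ (forall j : nat, (2 <= j <= c)%N -> (l j)%:R = 0 :> F)) ->
     (Ncount k b D)%:R
     = ('C(q - c, k))%:R / q%:R + q%:R^-1 * ((-1) ^+ k * R p q c k)).
Proof.
case: c hc hinj => [|[|n]] // _ hinj q D.
have main k b : (1 <= k <= q - n.+2)%N ->
    (Ncount k b D)%:R = 'C(q - n.+2, k)%:R / q%:R + q%:R^-1 * ((-1) ^+ k * R p q n.+2 k)
                        - (-1) ^+ k * Ssum p a n k.+1 k (- b).
  move=> /andP[k1 kq]; have nq : (n.+2 < q)%N by lia.
  by rewrite (Ncount_avoid hp ha1 ha2 hinj nq (K := k.+1)) // [q%:R^-1 * _]mulrC.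
split => [k b kq | k b kq b_indep]; rewrite main //.
  by rewrite [LHS]addrC addrA addKr subn2.
by rewrite Ssum_independent // mulr0 subr0.
Qed.
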